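(* Let $p$ be an odd prime and let $g$, $g'$ both be of the form \[F(x)+G\!\left(\tfrac1x\right)+H\!\left(\tfrac1{x-1}\right)+\sum_{j=4}^{r+1}J_j\!\left(\tfrac{1}{x-\theta_j}\right)\] described below, with the same pole orders, where $d_1>d_2>d_3$ and $\{d_1,d_2,d_3\}\cap\{d_4,\dots,d_{r+1}\}=\emptyset$. If $(M,\lambda,h)$ transforms $C_g$ into $C_{g'}$, then $M(x)=x$ and $h$ is a constant in $\mathbb{F}_p$; i.e., up to composition with $(x,y)\mapsto(x,y+c)$, $c\in\mathbb{F}_p$, every isomorphism preserving this form is $(x,y)\mapsto(x,\lambda y)$ for some $\lambda\in\mathbb{F}_p^\times$ (and then $g'=g/\lambda$ up to the relabeling of the $\theta_j$).
   Context: Form: $F(x)=\sum_{i=1}^{d_1}a_ix^i$, $G(x)=\sum_{i=1}^{d_2}b_ix^i$, $H(x)=\sum_{i=1}^{d_3}c_ix^i$, $J_j(x)=\sum_{i=1}^{d_j}e_{ij}x^i$ with all $d_i$ not divisible by $p$, $a_i=b_i=c_i=e_{ij}=0$ whenever $p\mid i$, $a_{d_1},b_{d_2},c_{d_3},e_{d_jj}\ne0$, and $\theta_4,\dots,\theta_{r+1}\in\overline{\mathbb{F}}_p\setminus\{0,1\}$ distinct. For $f\in\overline{\mathbb{F}}_p(x)$, $C_f$ is the curve $y^p-y=f(x)$. For a Möbius transformation $M(x)=\frac{\alpha x+\beta}{\gamma x+\delta}$ ($\alpha\delta-\beta\gamma\ne0$), $\lambda\in\mathbb{F}_p^\times$,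 $h\in\overline{\mathbb{F}}_p(x)$, we say $(M,\lambda,h)$ transforms $C_f$ into $C_{f'}$ if $f(M(x))=\lambda f'(x)+h(x)^p-h(x)$. *)

From HB Require Import structures.
From mathcomp Require Import all_boot all_order all_algebra.
Set Implicit Arguments. Unset Strict Implicit. Unset Printing Implicit Defensive.
Import Order.TTheory GRing.Theory.
Local Open Scope ring_scope.

Definition ratfun (K : fieldType) := {fraction {poly K}}.

Definition rpoly (K : fieldType) (P : {poly K}) : ratfun K := tofrac P.
Definition rcst (K : fieldType) (c : K) : ratfun K := rpoly c%:P.
Definition rX (K : fieldType) : ratfun K := rpoly 'X.

Definition peval (K : fieldType) (P : {poly K}) (m : ratfun K) : ratfun K :=
  \sum_(i < size P) rcst P`_i * m ^+ i.

(* "P = sum_{i=1}^{d} c_i x^i with p not dividing d, c_d <> 0, and c_i = 0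
   whenever p | i" (the condition at i = 0 gives the vanishing constant term). *)
Definition good_part (K : fieldType) (p d : nat) (P : {poly K}) : Prop :=
  [/\ size P = d.+1, ~~ (p %| d)%N & forall i : nat, (p %| i)%N -> P`_i = 0].

(* The extra points are indexed by j : 'I_n  (n = r - 2, j <-> j+4). *)
Definition gform (K : fieldType) (n : nat) (F G H : {poly K})
    (J : 'I_n -> {poly K}) (theta : 'I_n -> K) (m : ratfun K) : ratfun K :=
  peval F m + peval G m^-1 + peval H (m - 1)^-1
  + \sum_(j < n) peval (J j) (m - rcst (theta j))^-1.

(* g is of the form in the paper, with pole orders d1 (at infinity), d2 (at 0),
   d3 (at 1), d j (at theta j). *)
Definition is_form (K : fieldType) (p n : nat) (d1 d2 d3 : nat) (d : 'I_n -> nat)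
    (F G H : {poly K}) (J : 'I_n -> {poly K}) (theta : 'I_n -> K) : Prop :=
  [/\ good_part p d1 F, good_part p d2 G, good_part p d3 H,
      forall j, good_part p (d j) (J j)
    & (forall j, theta j != 0 /\ theta j != 1) /\ injective theta].

Definition moebius (K : fieldType) (alpha beta gamma delta : K) : ratfun K :=
  (rcst alpha * rX K + rcst beta) / (rcst gamma * rX K + rcst delta).

From HB Require Import structures.
From mathcomp Require Import all_boot all_order all_algebra.
From mathcomp Require Import fraction zify ring.
Import Order.TTheory GRing.Theory Num.Theory.
Local Open Scope ring_scope.
Local Open Scope quotient_scope.

(* Compare pole orders.  At every place, the pole order of [h ^+ p - h] is [p]
   times that of [h], whereas a form of the given shape has polar parts in
   which no exponent divisible by [p] occurs, so its pole orders are never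
   positive multiples of [p].  Hence [g o M] and [g'] have the same pole
   orders wherever those of [g o M] are not multiples of [p].  If [gamma != 0],
   [g o M] has a pole of order [d1] at the finite point [M^-1(oo)], which [g']
   cannot have; so [M] is affine, and the poles of orders [d2] and [d3] at
   [M^-1(0)] and [M^-1(1)] force [M(x) = x].  Then [g - lambda g'] has no pole
   of order a positive multiple of [p], so [h] has no pole at all and is a
   constant [c]; comparing constant terms at infinity gives [c ^+ p = c]. *)

HB.instance Definition _ (K : fieldType) :=
  GRing.RMorphism.copy (@rpoly K) (@tofrac _).
HB.instance Definition _ (K : fieldType) :=
  GRing.RMorphism.copy (@rcst K) (@rpoly K \o polyC).

Section Valuation.
Context {K : fieldType}.
Local Notation RF := (ratfun K).
Implicit Types (z : option K) (P Q : {poly K}) (f g : RF).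

Definition pnu z P : int :=
  if z is Some a then (mup a P)%:Z else - ((size P).-1)%:Z.

Lemma pnuM z P Q : P != 0 -> Q != 0 -> pnu z (P * Q) = pnu z P + pnu z Q.
Proof.
move=> P0 Q0; case: z => [a|] /=; first by rewrite mupM.
rewrite size_mul //.
have := size_poly_gt0 P; have := size_poly_gt0 Q; rewrite P0 Q0.
move: (size P) (size Q) => m k; lia.
Qed.

Lemma pnuD_ge z P Q (k : int) : P + Q != 0 ->
  k <= pnu z P -> k <= pnu z Q -> k <= pnu z (P + Q).
Proof.
move=> PQ0; case: z => [a|] /=.
  case: k => [k|//]; rewrite !lez_nat.
  have [->|P0] := eqVneq P 0; first by rewrite add0r.
  have [->|Q0] := eqVneq Q 0; first by rewrite addr0.
  by rewrite !mup_geq //; apply: dvdp_add.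
have := size_polyD P Q; have := size_poly_gt0 (P + Q); rewrite PQ0 leq_max.
move: (size P) (size Q) (size (P + Q)) => m l s; lia.
Qed.

Lemma pnuC z c : c != 0 -> pnu z c%:P = 0.
Proof.
move=> c0; case: z => [a|] /=; last by rewrite size_polyC c0.
by rewrite mupNroot // rootC.
Qed.

Lemma rpoly_eq0 P : (rpoly P == 0) = (P == 0).
Proof. exact: tofrac_eq0. Qed.

Lemma rpoly_frac_eq P Q P' Q' : Q != 0 -> Q' != 0 ->
  (rpoly P / rpoly Q == rpoly P' / rpoly Q') = (P * Q' == P' * Q).
Proof. by move=> Q0 Q'0; rewrite eqr_div ?rpoly_eq0 // -!rmorphM tofrac_eq. Qed.

Lemma ratio_fracE (x : {ratio {poly K}}) :
  \pi_RF x = rpoly \n_x / rpoly \d_x.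
Proof.
rewrite /rpoly; unlock tofrac.
have -> : \pi_RF (Ratio \n_x 1) / \pi_RF (Ratio \d_x 1)
  = \pi_RF (FracField.mulf (Ratio \n_x 1) (FracField.invf (Ratio \d_x 1))).
  by rewrite FracField.pi_mul FracField.pi_inv.
apply/eqmodP; rewrite /= FracField.equivfE /FracField.mulf /FracField.invf /=.
by rewrite !numden_Ratio ?oner_neq0 ?mul1r ?mulr1 ?denom_ratioP // mulrC.
Qed.

(* [nu z] is the valuation at the place [z] of the projective line, [None]
   being the point at infinity; the junk value at [0] is [0]. *)
Definition nu z f : int :=
  if f == 0 then 0 else pnu z \n_(repr f) - pnu z \d_(repr f).

Lemma nu0 z : nu z 0 = 0.
Proof. by rewrite /nu eqxx. Qed.

Lemma nu_frac z P Q : P != 0 -> Q != 0 ->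
  nu z (rpoly P / rpoly Q) = pnu z P - pnu z Q.
Proof.
move=> P0 Q0; rewrite /nu mulf_eq0 invr_eq0 !rpoly_eq0 (negbTE P0) (negbTE Q0).
set x := repr _; have Q'0 := denom_ratioP x.
have /eqP := ratio_fracE x; rewrite reprK eq_sym rpoly_frac_eq // => /eqP e.
have P'0 : \n_x != 0.
  by apply: contra_neq P0 => P'0; apply: (mulIf Q'0); rewrite -e P'0 !mul0r.
by apply/eqP; rewrite subr_eq addrAC eq_sym subr_eq -!pnuM // e.
Qed.

Lemma ratfun_frac f : f != 0 ->
  exists P Q, [/\ P != 0, Q != 0 & f = rpoly P / rpoly Q].
Proof.
move=> f0; set x := repr f.
have e : f = rpoly \n_x / rpoly \d_x by rewrite -ratio_fracE reprK.
exists \n_x, \d_x; split=> //; last exact: denom_ratioP.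
by apply: contra_neq f0 => n0; rewrite e n0 rmorph0 mul0r.
Qed.

Lemma nu_rpoly z P : P != 0 -> nu z (rpoly P) = pnu z P.
Proof.
move=> P0; rewrite -[rpoly P]divr1 -(rmorph1 (@rpoly K)) nu_frac ?oner_neq0 //.
by rewrite -polyC1 pnuC ?oner_neq0 // subr0.
Qed.

Lemma nuM z {f g} : f != 0 -> g != 0 -> nu z (f * g) = nu z f + nu z g.
Proof.
move=> /ratfun_frac[P [Q [P0 Q0 ->]]] /ratfun_frac[P' [Q' [P'0 Q'0 ->]]].
rewrite mulf_div -!rmorphM !nu_frac ?mulf_neq0 // !pnuM //; lia.
Qed.

Lemma nuV z f : nu z f^-1 = - nu z f.
Proof.
have [->|/ratfun_frac[P [Q [P0 Q0 ->]]]] := eqVneq f 0; first by rewrite invr0 nu0.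
rewrite invf_div !nu_frac //; lia.
Qed.

Lemma nu_rcst z c : nu z (rcst c) = 0.
Proof.
have [->|c0] := eqVneq c 0; first by rewrite rmorph0 nu0.
by rewrite nu_rpoly ?polyC_eq0 // pnuC.
Qed.

Lemma nuN z f : nu z (- f) = nu z f.
Proof.
have [->|f0] := eqVneq f 0; first by rewrite oppr0.
have m1 : rcst (-1 : K) != 0 by rewrite rmorphN1 oppr_eq0 oner_eq0.
have -> : - f = rcst (-1) * f by rewrite rmorphN1 mulN1r.
by rewrite (nuM z m1 f0) nu_rcst add0r.
Qed.

Lemma nuX z f k : nu z (f ^+ k) = nu z f *+ k.
Proof.
elim: k => [|k IH]; first by rewrite expr0 -(rmorph1 (@rcst K)) nu_rcst.
have [->|f0] := eqVneq f 0; first by rewrite exprS mul0r nu0 mul0rn.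
by rewrite exprS (nuM z f0) ?expf_neq0 // IH mulrS.
Qed.

Lemma nuD_ge z f g (k : int) :
  k <= nu z f -> k <= nu z g -> f + g != 0 -> k <= nu z (f + g).
Proof.
have [->|f0] := eqVneq f 0; first by rewrite add0r.
have [->|g0] := eqVneq g 0; first by rewrite addr0.
move: f0 g0 => /ratfun_frac[P [Q [P0 Q0 ->]]] /ratfun_frac[P' [Q' [P'0 Q'0 ->]]].
have [Qr Q'r] : rpoly Q != 0 /\ rpoly Q' != 0 by rewrite !rpoly_eq0.
rewrite (addf_div _ _ Qr Q'r) -!rmorphM -rmorphD => h1 h2 hs.
have hn : P * Q' + P' * Q != 0.
  by apply: contraNneq hs => ->; rewrite rmorph0 mul0r.
move: h1 h2; rewrite !nu_frac ?mulf_neq0 // => h1 h2.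
rewrite lerBrDr; apply: pnuD_ge => //; rewrite !pnuM //; lia.
Qed.

End Valuation.

Section Poles.
Context {K : fieldType}.
Local Notation RF := (ratfun K).
Implicit Types (z : option K) (P Q : {poly K}) (f g : RF).

Definition nu_ge z (k : int) f := f = 0 \/ k <= nu z f.

Lemma nu_ge_le {z k k' f} : k' <= k -> nu_ge z k f -> nu_ge z k' f.
Proof. by move=> le [->|h]; [left | right; apply: le_trans h]. Qed.

Lemma nu_geD {z k f g} : nu_ge z k f -> nu_ge z k g -> nu_ge z k (f + g).
Proof.
move=> [->|hf]; first by rewrite add0r.
move=> [->|hg]; first by rewrite addr0; right.
have [fg0|fg0] := eqVneq (f + g) 0; [by left | by right; apply: nuD_ge].
Qed.

Lemma nu_geN {z k f} : nu_ge z k f -> nu_ge z k (- f).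
Proof. by move=> [->|h]; [left; rewrite oppr0 | right; rewrite nuN]. Qed.

Lemma nu_geM {z k l f g} : nu_ge z k f -> nu_ge z l g -> nu_ge z (k + l) (f * g).
Proof.
move=> [->|hf]; first by left; rewrite mul0r.
move=> [->|hg]; first by left; rewrite mulr0.
have [f0|f0] := eqVneq f 0; first by left; rewrite f0 mul0r.
have [g0|g0] := eqVneq g 0; first by left; rewrite g0 mulr0.
by right; rewrite nuM // lerD.
Qed.

Lemma nu_ge_rcst z c : nu_ge z 0 (rcst c).
Proof. by right; rewrite nu_rcst. Qed.

Lemma nu_geX {z k f} m : nu_ge z k f -> nu_ge z (k *+ m) (f ^+ m).
Proof.
move=> h; elim: m => [|m IH]; last by rewrite exprS mulrS; apply: nu_geM.
by rewrite expr0 mulr0n -(rmorph1 (@rcst K)); apply: nu_ge_rcst.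
Qed.

Lemma nu_ge_sum z k (I : Type) (r : seq I) (P : pred I) (T : I -> RF) :
  (forall i, P i -> nu_ge z k (T i)) -> nu_ge z k (\sum_(i <- r | P i) T i).
Proof. by move=> h; apply: big_ind => //; [left | move=> f g; apply: nu_geD]. Qed.

Lemma nuD_eql {z f g} : f != 0 -> nu_ge z (nu z f + 1) g ->
  f + g != 0 /\ nu z (f + g) = nu z f.
Proof.
move=> f0 hg; have [->|g0] := eqVneq g 0; first by rewrite addr0.
have {hg} hlt : nu z f < nu z g.
  by case: hg => [/eqP|]; [rewrite (negbTE g0) | lia].
have fg0 : f + g != 0.
  apply: contraTneq hlt => /(canRL (addKr f)); rewrite addr0 => ->.
  by rewrite nuN ltxx.
split=> //.
have h1 : nu z f <= nu z (f + g) by apply: nuD_ge => //; apply: ltW.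
have := @nuD_ge _ z (f + g) (- g) (Num.min (nu z (f + g)) (nu z g)).
rewrite nuN addrK ge_min lexx ge_min lexx orbT => /(_ isT isT f0).
lia.
Qed.

Definition pole z f : nat := absz (Num.min 0 (nu z f)).

Lemma pole0 z : pole z 0 = 0%N.
Proof. by rewrite /pole nu0 minxx. Qed.

Lemma pole_leP z f (m : nat) : (pole z f <= m)%N <-> nu_ge z (- m%:Z) f.
Proof.
rewrite /pole; have [->|f0] := eqVneq f 0; first by rewrite nu0 minxx; split => // _; left.
by split => [h|[/eqP|]]; [right | rewrite (negbTE f0) |]; lia.
Qed.

Lemma pole_eq0 z f : pole z f = 0%N <-> nu_ge z 0 f.
Proof. by rewrite -[X in nu_ge _ X]oppr0 -pole_leP leqn0; split=> /eqP. Qed.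

Lemma pole_gt0 {z f} : (0 < pole z f)%N -> nu z f = - (pole z f)%:Z.
Proof. by rewrite /pole; lia. Qed.

Lemma pole_nu {z f} {m : nat} : nu z f = - m%:Z -> pole z f = m.
Proof. by rewrite /pole => ->; lia. Qed.

Lemma poleN z f : pole z (- f) = pole z f.
Proof. by rewrite /pole nuN. Qed.

Lemma poleZ z c f : c != 0 -> pole z (rcst c * f) = pole z f.
Proof.
move=> c0; have [->|f0] := eqVneq f 0; first by rewrite mulr0.
have c0' : rcst c != 0 :> RF by rewrite rpoly_eq0 polyC_eq0.
by rewrite /pole (nuM z c0' f0) nu_rcst add0r.
Qed.

Lemma poleD_ltr z f g : (pole z g < pole z f)%N -> pole z (f + g) = pole z f.
Proof.
move=> hlt; have hf := pole_gt0 (leq_ltn_trans (leq0n _) hlt).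
have f0 : f != 0 by apply: contraTneq hlt => ->; rewrite pole0.
have hg : nu_ge z (nu z f + 1) g.
  by apply: nu_ge_le (proj1 (pole_leP z g _) (leqnn _)); rewrite hf; lia.
by have [_ e] := nuD_eql f0 hg; apply: pole_nu; rewrite e hf.
Qed.

Lemma poleD_eq0r z f g : pole z g = 0%N -> pole z (f + g) = pole z f.
Proof.
move=> g0; have [f0|f_gt0] := posnP (pole z f); last by apply: poleD_ltr; rewrite g0.
by rewrite f0; apply/pole_eq0; apply: nu_geD; apply/pole_eq0.
Qed.

Lemma pole_sum_eq0 z (I : Type) (r : seq I) (P : pred I) (T : I -> RF) :
  (forall i, P i -> pole z (T i) = 0%N) -> pole z (\sum_(i <- r | P i) T i) = 0%N.
Proof. by move=> h; apply/pole_eq0/nu_ge_sum => i /h /pole_eq0. Qed.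

(* The pole of [h ^+ p] dominates that of [h]. *)
Lemma pole_AS z (p : nat) h : (1 < p)%N -> pole z (h ^+ p - h) = (p * pole z h)%N.
Proof.
move=> p1; have [h0|hpos] := posnP (pole z h).
  rewrite h0 muln0; apply/pole_eq0; apply: nu_geD; last by apply/nu_geN/pole_eq0.
  by rewrite -(mul0rn _ p); apply/nu_geX/pole_eq0.
have hnu := pole_gt0 hpos.
have hX : nu z (h ^+ p) = - (p * pole z h)%:Z by rewrite nuX hnu -mulr_natr natz; lia.
by rewrite poleD_ltr (pole_nu hX) // poleN ltn_Pmull.
Qed.

End Poles.

Section Substitution.
Context {K : fieldType}.
Local Notation RF := (ratfun K).
Implicit Types (z : option K) (P Q : {poly K}) (f g N : RF).

Lemma peval_widen P N n : (size P <= n)%N ->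
  peval P N = \sum_(i < n) rcst P`_i * N ^+ i.
Proof.
move=> le; rewrite /peval -(subnKC le) big_split_ord /=.
rewrite [X in _ + X]big1 ?addr0 // => i _.
by rewrite nth_default ?leq_addr // rmorph0 mul0r.
Qed.

Lemma peval0 N : peval 0 N = 0.
Proof. by rewrite /peval size_poly0 big_ord0. Qed.

Lemma pevalD P Q N : peval (P + Q) N = peval P N + peval Q N.
Proof.
pose n := maxn (size P) (size Q).
rewrite !(@peval_widen _ _ n) ?leq_maxl ?leq_maxr ?size_polyD // -big_split /=.
by apply: eq_bigr => i _; rewrite coefD rmorphD mulrDl.
Qed.

Lemma pevalCM c P N : peval (c%:P * P) N = rcst c * peval P N.
Proof.
rewrite [LHS](@peval_widen _ _ (size P)); last by rewrite mul_polyC size_scale_leq.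
rewrite (@peval_widen _ _ (size P)) // mulr_sumr.
by apply: eq_bigr => i _; rewrite coefCM rmorphM mulrA.
Qed.

Lemma peval_rX P : peval P (rX K) = rpoly P.
Proof.
rewrite -{2}(coefK P) poly_def rmorph_sum /=.
by apply: eq_bigr => i _; rewrite -mul_polyC rmorphM rmorphXn.
Qed.

Lemma nu_ge_peval z P N : nu_ge z 0 N -> nu_ge z 0 (peval P N).
Proof.
move=> hN; apply: nu_ge_sum => i _; rewrite -[0]add0r.
by apply: nu_geM; [apply: nu_ge_rcst | rewrite -(mul0rn _ i); apply: nu_geX].
Qed.

Lemma nu_ge1_peval z P N : nu_ge z 1 N -> P`_0 = 0 -> nu_ge z 1 (peval P N).
Proof.
move=> hN hP0; apply: nu_ge_sum => -[[|i] hi] _ /=.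
  by rewrite hP0 rmorph0 mul0r; left.
rewrite -[1]add0r; apply: nu_geM; first exact: nu_ge_rcst.
by apply: nu_ge_le (nu_geX i.+1 hN); rewrite -mulr_natr natz; lia.
Qed.

Lemma pole_peval z P N : nu z N = -1 -> pole z (peval P N) = (size P).-1.
Proof.
move=> hN; have [->|P0] := eqVneq P 0; first by rewrite peval0 pole0 size_poly0.
have N0 : N != 0 by apply: contra_eqN hN => /eqP ->; rewrite nu0.
have eP : size P = (size P).-1.+1 by rewrite prednK // size_poly_gt0.
move: (size P).-1 eP => n eP; rewrite /peval eP big_ord_recr /= addrC.
have Nk k : nu z (N ^+ k) = - k%:Z by rewrite nuX hN -mulr_natr natz; lia.
have hlead : pole z (rcst P`_n * N ^+ n) = n.
  by rewrite poleZ ?(pole_nu (Nk _)) // -[n]/(n.+1.-1) -eP -lead_coefE lead_coef_eq0.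
case: n eP hlead => [|n] eP hlead; first by rewrite big_ord0 addr0.
rewrite poleD_ltr hlead // ltnS; apply/pole_leP.
apply: nu_ge_sum => -[i hi] _ /=; rewrite -[X in nu_ge _ X]add0r.
by apply: nu_geM; [exact: nu_ge_rcst | right; rewrite Nk; lia].
Qed.

End Substitution.

Section Places.
Context {K : fieldType}.
Local Notation RF := (ratfun K).
Implicit Types (z : option K) (P Q : {poly K}) (f g N : RF).

Lemma rXsubC t : rX K - rcst t = rpoly ('X - t%:P).
Proof. by rewrite rmorphB. Qed.

Lemma rXsubC_neq0 t : rX K - rcst t != 0.
Proof. by rewrite rXsubC rpoly_eq0 polyXsubC_eq0. Qed.

Lemma nu_rXsubC a t : nu (Some a) (rX K - rcst t) = (t == a)%:R.
Proof.
rewrite rXsubC nu_rpoly ?polyXsubC_eq0 //= -(expr1 ('X - t%:P)) mup_XsubCX.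
by case: (t == a).
Qed.

Lemma nu_inf_rXsubC t : nu None (rX K - rcst t) = -1.
Proof. by rewrite rXsubC nu_rpoly ?polyXsubC_eq0 //= size_XsubC. Qed.

Lemma nu_inf_rX : nu None (rX K) = -1.
Proof. by rewrite -[rX K]subr0 -(rmorph0 (@rcst K)) nu_inf_rXsubC. Qed.

Lemma nu_inf_ge1_rpoly P : nu_ge None 1 (rpoly P) -> P = 0.
Proof.
case=> [/eqP|]; first by rewrite rpoly_eq0 => /eqP.
have [->|P0] := eqVneq P 0; first by rewrite rmorph0 nu0.
by rewrite nu_rpoly //=; lia.
Qed.

(* The inverse of the standard local parameter at [z]. *)
Definition simple_pole z : RF :=
  if z is Some a then (rX K - rcst a)^-1 else rX K.

Lemma nu_simple_pole z : nu z (simple_pole z) = -1.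
Proof. by case: z => [a|] /=; rewrite ?nuV ?nu_rXsubC ?eqxx // nu_inf_rX. Qed.

Lemma pole_peval_rX a P : pole (Some a) (peval P (rX K)) = 0%N.
Proof.
apply/pole_eq0; rewrite peval_rX; have [->|P0] := eqVneq P 0; first by left; rewrite rmorph0.
by right; rewrite nu_rpoly.
Qed.

Lemma pole_inf_peval_inv P t : pole None (peval P (rX K - rcst t)^-1) = 0%N.
Proof. by apply/pole_eq0/nu_ge_peval; right; rewrite nuV nu_inf_rXsubC. Qed.

Lemma pole_peval_inv a P t :
  pole (Some a) (peval P (rX K - rcst t)^-1) = if t == a then (size P).-1 else 0%N.
Proof.
have [->|ne] := eqVneq t a; first by rewrite pole_peval // nuV nu_rXsubC eqxx.
by apply/pole_eq0/nu_ge_peval; right; rewrite nuV nu_rXsubC (negbTE ne) oppr0.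
Qed.

End Places.

Section PFree.
Context {K : fieldType}.
Local Notation RF := (ratfun K).
Variable p : nat.
Implicit Types (z : option K) (P Q : {poly K}) (f g N : RF).

Definition pfree P := forall i, (p %| i)%N -> P`_i = 0.

Definition not_pmul (e : nat) := (p %| e)%N -> e = 0%N.

Lemma pfree0 : pfree 0.
Proof. by move=> i _; rewrite coef0. Qed.

Lemma pfreeD P Q : pfree P -> pfree Q -> pfree (P + Q).
Proof. by move=> hP hQ i hi; rewrite coefD hP ?hQ ?addr0. Qed.

Lemma pfreeCM c P : pfree P -> pfree (c%:P * P).
Proof. by move=> hP i hi; rewrite coefCM hP ?mulr0. Qed.

Lemma pfree_not_pmul P : pfree P -> not_pmul (size P).-1.
Proof.
move=> hP /hP; rewrite -lead_coefE => /eqP; rewrite lead_coef_eq0 => /eqP ->.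
by rewrite size_poly0.
Qed.

Definition pfree_polar z f :=
  exists P R, [/\ pfree P, pole z R = 0%N & f = peval P (simple_pole z) + R].

Lemma pfree_polar_pole0 z f : pole z f = 0%N -> pfree_polar z f.
Proof. by exists 0, f; rewrite peval0 add0r; split=> //; apply: pfree0. Qed.

Lemma pfree_polarD z f g : pfree_polar z f -> pfree_polar z g -> pfree_polar z (f + g).
Proof.
move=> [P [R [hP hR ->]]] [P' [R' [hP' hR' ->]]].
exists (P + P'), (R + R'); split; first exact: pfreeD.
  by rewrite poleD_eq0r.
by rewrite pevalD addrACA.
Qed.

Lemma pfree_polarZ z c f : pfree_polar z f -> pfree_polar z (rcst c * f).
Proof.
move=> [P [R [hP hR ->]]].
exists (c%:P * P), (rcst c * R); split; first exact: pfreeCM.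
  by have [->|c0] := eqVneq c 0; rewrite ?rmorph0 ?mul0r ?pole0 ?poleZ.
by rewrite pevalCM mulrDr.
Qed.

Lemma pfree_polar_sum z (I : Type) (r : seq I) (P : pred I) (T : I -> RF) :
  (forall i, P i -> pfree_polar z (T i)) -> pfree_polar z (\sum_(i <- r | P i) T i).
Proof.
move=> h; apply: big_ind => //; last exact: pfree_polarD.
by apply: pfree_polar_pole0; rewrite pole0.
Qed.

Lemma pfree_polar_rX z P : pfree P -> pfree_polar z (peval P (rX K)).
Proof.
case: z => [a|] hP; first by apply: pfree_polar_pole0; rewrite pole_peval_rX.
by exists P, 0; rewrite addr0 pole0.
Qed.

Lemma pfree_polar_inv z P t : pfree P -> pfree_polar z (peval P (rX K - rcst t)^-1).
Proof.
case: z => [a|] hP; last by apply: pfree_polar_pole0; rewrite pole_inf_peval_inv.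
have [<-|ne] := eqVneq t a; first by exists P, 0; rewrite addr0 pole0.
by apply: pfree_polar_pole0; rewrite pole_peval_inv (negbTE ne).
Qed.

Lemma pfree_polar_not_pmul z f : pfree_polar z f -> not_pmul (pole z f).
Proof.
move=> [P [R [hP hR ->]]].
by rewrite poleD_eq0r // pole_peval ?nu_simple_pole //; apply: pfree_not_pmul.
Qed.

Lemma pole_eq_AS z f g h : (1 < p)%N -> not_pmul (pole z f) -> not_pmul (pole z g) ->
  f - g = h ^+ p - h -> pole z f = pole z g.
Proof.
move=> p1 hf hg e.
have hp0 : (p %| pole z (f - g)%R)%N by rewrite e pole_AS // dvdn_mulr.
have [lt|gt|//] := ltngtP (pole z f) (pole z g).
- have e' : pole z (f - g) = pole z g by rewrite addrC poleD_ltr poleN.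
  by move: lt; rewrite (hg _) // -e'.
- have e' : pole z (f - g) = pole z f by rewrite poleD_ltr ?poleN.
  by move: gt; rewrite (hf _) // -e'.
Qed.

End PFree.

Section Form.
Context {K : fieldType}.
Local Notation RF := (ratfun K).
Context {n : nat} {F G H : {poly K}} {J : 'I_n -> {poly K}} {theta : 'I_n -> K}.
Implicit Types (z : option K) (P Q : {poly K}) (f g M : RF).

Local Notation g M := (gform F G H J theta M).

Lemma gformE M : g M = peval F M + peval G (M - rcst 0)^-1
  + peval H (M - rcst 1)^-1 + \sum_(j < n) peval (J j) (M - rcst (theta j))^-1.
Proof. by rewrite rmorph0 rmorph1 subr0. Qed.

Lemma pfree_polar_gform p z : pfree p F -> pfree p G -> pfree p H ->
  (forall j, pfree p (J j)) -> pfree_polar p z (g (rX K)).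
Proof.
move=> hF hG hH hJ; rewrite gformE.
apply: pfree_polarD; last by apply: pfree_polar_sum => j _; apply: pfree_polar_inv.
apply: pfree_polarD; first apply: pfree_polarD.
all: by [apply: pfree_polar_rX | apply: pfree_polar_inv].
Qed.

Lemma pole_peval_inv_pole z M P t : nu z M = -1 ->
  pole z (peval P (M - rcst t)^-1) = 0%N.
Proof.
move=> hM; have M0 : M != 0 by apply: contra_eqN hM => /eqP ->; rewrite nu0.
apply/pole_eq0/nu_ge_peval; right.
have ht : nu_ge z (nu z M + 1) (- rcst t) by right; rewrite nuN nu_rcst hM.
by rewrite nuV; have [_ ->] := nuD_eql M0 ht; rewrite hM.
Qed.

Lemma pole_gform_pole {z M} : nu z M = -1 -> pole z (g M) = (size F).-1.
Proof.
move=> hM; rewrite gformE poleD_eq0r; last first.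
  by apply: pole_sum_eq0 => j _; apply: pole_peval_inv_pole.
by rewrite !poleD_eq0r ?pole_peval_inv_pole // pole_peval.
Qed.

Lemma pole_peval_inv_zero {z M s} t P : nu z (M - rcst s) = 1 ->
  pole z (peval P (M - rcst t)^-1) = if t == s then (size P).-1 else 0%N.
Proof.
move=> hs; have [->|ne] := eqVneq t s; first by rewrite pole_peval // nuV hs.
have st : rcst (s - t) != 0 :> RF by rewrite rpoly_eq0 polyC_eq0 subr_eq0 eq_sym.
have -> : M - rcst t = rcst (s - t) + (M - rcst s) by rewrite rmorphB; ring.
have hst : nu_ge z (nu z (rcst (s - t)) + 1) (M - rcst s) by right; rewrite nu_rcst hs.
have [_ e] := nuD_eql st hst.
by apply/pole_eq0/nu_ge_peval; right; rewrite nuV e nu_rcst oppr0.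
Qed.

Lemma pole_peval_zero {z M s} P : nu z (M - rcst s) = 1 -> pole z (peval P M) = 0%N.
Proof.
move=> hs; apply/pole_eq0/nu_ge_peval.
rewrite -(subrK (rcst s) M) -[0]addr0; apply: nu_geD; last exact: nu_ge_rcst.
by right; rewrite hs.
Qed.

Lemma pole_gform_zero0 z M : (forall j, theta j != 0) -> nu z (M - rcst 0) = 1 ->
  pole z (g M) = (size G).-1.
Proof.
move=> ht hM; rewrite gformE poleD_eq0r; last first.
  by apply: pole_sum_eq0 => j _; rewrite (pole_peval_inv_zero _ _ hM) (negbTE (ht j)).
rewrite poleD_eq0r; last by rewrite (pole_peval_inv_zero _ _ hM) oner_eq0.
rewrite addrC poleD_eq0r; last exact: pole_peval_zero hM.
by rewrite (pole_peval_inv_zero _ _ hM) eqxx.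
Qed.

Lemma pole_gform_zero1 z M : (forall j, theta j != 1) -> nu z (M - rcst 1) = 1 ->
  pole z (g M) = (size H).-1.
Proof.
move=> ht hM; rewrite gformE poleD_eq0r; last first.
  by apply: pole_sum_eq0 => j _; rewrite (pole_peval_inv_zero _ _ hM) (negbTE (ht j)).
rewrite addrC poleD_eq0r; last first.
  rewrite poleD_eq0r; last by rewrite (pole_peval_inv_zero _ _ hM) eq_sym oner_eq0.
  exact: pole_peval_zero hM.
by rewrite (pole_peval_inv_zero _ _ hM) eqxx.
Qed.

Lemma pole_gform_rX a :
  (forall j, theta j != 0 /\ theta j != 1) -> injective theta ->
  (0 < pole (Some a) (g (rX K)))%N ->
  [\/ a = 0 /\ pole (Some a) (g (rX K)) = (size G).-1,
      a = 1 /\ pole (Some a) (g (rX K)) = (size H).-1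
    | exists j, pole (Some a) (g (rX K)) = (size (J j)).-1].
Proof.
move=> ht inj; rewrite gformE.
set SJ := \sum_(j < n) _.
have SJ0 : (forall j, theta j != a) -> pole (Some a) SJ = 0%N.
  by move=> hj; apply: pole_sum_eq0 => j _; rewrite pole_peval_inv (negbTE (hj j)).
have [a0|a0] := eqVneq a 0.
  move=> _; constructor 1; split=> //.
  rewrite poleD_eq0r; last by apply: SJ0 => j; rewrite a0 (proj1 (ht j)).
  rewrite poleD_eq0r ?pole_peval_inv ?a0 ?oner_eq0 //.
  by rewrite addrC poleD_eq0r ?pole_peval_rX // pole_peval_inv eqxx.
have [a1|a1] := eqVneq a 1.
  move=> _; constructor 2; split=> //.
  rewrite poleD_eq0r; last by apply: SJ0 => j; rewrite a1 (proj2 (ht j)).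
  rewrite addrC poleD_eq0r ?pole_peval_inv ?a1 ?eqxx //.
  by rewrite poleD_eq0r ?pole_peval_rX // pole_peval_inv eq_sym oner_eq0.
have -> : pole (Some a) (peval F (rX K) + peval G (rX K - rcst 0)^-1
    + peval H (rX K - rcst 1)^-1 + SJ) = pole (Some a) SJ.
  rewrite addrC poleD_eq0r // poleD_eq0r ?pole_peval_inv 1?eq_sym ?(negbTE a1) //.
  by rewrite poleD_eq0r ?pole_peval_rX // pole_peval_inv eq_sym (negbTE a0).
have [j hj|nj] := pickP (fun j => theta j == a); last by rewrite SJ0 // => j; rewrite nj.
move=> _; constructor 3; exists j; rewrite /SJ (bigD1 j) //= poleD_eq0r.
  by rewrite pole_peval_inv hj.
apply: pole_sum_eq0 => i ij; rewrite pole_peval_inv; case: eqP => // ei.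
by move/eqP: hj; rewrite -ei => /inj eij; rewrite eij eqxx in ij.
Qed.

Lemma gform_rX_inf : G`_0 = 0 -> H`_0 = 0 -> (forall j, (J j)`_0 = 0) ->
  exists2 R, nu_ge None 1 R & g (rX K) = rpoly F + R.
Proof.
move=> hG hH hJ; rewrite gformE peval_rX -!addrA; eexists=> //.
have hv t : nu_ge None 1 (rX K - rcst t)^-1 by right; rewrite nuV nu_inf_rXsubC.
apply: nu_geD; first exact: nu_ge1_peval.
apply: nu_geD; first exact: nu_ge1_peval.
by apply: nu_ge_sum => j _; apply: nu_ge1_peval.
Qed.

End Form.

Lemma pnu_le_rcst (K : closedFieldType) (P Q : {poly K}) : Q != 0 ->
  (forall z, pnu z Q <= pnu z P) -> exists c, rpoly P / rpoly Q = rcst c.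
Proof.
(* Induct on [size Q], cancelling a factor [X - a] at a root [a] of [Q]. *)
have [-> _ _|P0] := eqVneq P 0; first by exists 0; rewrite !rmorph0 mul0r.
elim: {Q}(size Q) {-2}Q (leqnn (size Q)) P P0 => [|m IH] Q sQ P P0 Q0 hPQ.
  by move: Q0; rewrite -size_poly_eq0 -leqn0 sQ.
have [sQ1|sQ1] := leqP (size Q) 1.
  have sP1 : (size P <= 1)%N.
    have := hPQ None; rewrite /= lerN2 lez_nat; move: sQ1.
    by case: (size P) => [|[|k]]; case: (size Q) => [|[|l]].
  have q0 : Q`_0 != 0 by apply: contra_neq Q0 => q0; rewrite [Q]size1_polyC // q0.
  exists (P`_0 / Q`_0); apply/eqP; rewrite [P]size1_polyC // [Q]size1_polyC //.
  rewrite -[rcst _]divr1 -(rmorph1 (@rpoly K)) rpoly_frac_eq ?polyC_eq0 ?oner_neq0 //.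
  by rewrite !coefC /= mulr1 -polyCM divfK.
have [a ra] : exists a, root Q a by apply/closed_rootP; rewrite neq_ltn sQ1 orbT.
have dQ : 'X - a%:P %| Q by rewrite dvdp_XsubCl.
have dP : 'X - a%:P %| P.
  rewrite XsubC_dvd //; apply: leq_trans (_ : 0 < mup a Q)%N _.
    by rewrite -XsubC_dvd.
  by have := hPQ (Some a); rewrite /= lez_nat.
have L0 : 'X - a%:P != 0 by rewrite polyXsubC_eq0.
move: (divpK dP) (divpK dQ); set P1 := P %/ _; set Q1 := Q %/ _ => eP eQ.
have P10 : P1 != 0 by apply: contra_neq P0 => e; rewrite -eP e mul0r.
have Q10 : Q1 != 0 by apply: contra_neq Q0 => e; rewrite -eQ e mul0r.
have sQ1' : (size Q1 <= m)%N by move: sQ; rewrite -eQ size_mul // size_XsubC addn2.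
have hPQ1 z : pnu z Q1 <= pnu z P1 by have := hPQ z; rewrite -eP -eQ !pnuM //; lia.
have [c ec] := IH Q1 sQ1' P1 P10 Q10 hPQ1.
exists c; rewrite -ec; apply/eqP; rewrite rpoly_frac_eq // -eP -eQ.
by rewrite mulrAC mulrA.
Qed.

Lemma pole_free_rcst {K : closedFieldType} {h : ratfun K} :
  (forall z, pole z h = 0%N) -> exists c, h = rcst c.
Proof.
move=> hz; have [->|/ratfun_frac[P [Q [P0 Q0 eh]]]] := eqVneq h 0.
  by exists 0; rewrite rmorph0.
have h0 : h != 0 by rewrite eh mulf_neq0 ?invr_eq0 ?rpoly_eq0.
rewrite eh; apply: pnu_le_rcst => // z.
have /pole_eq0[/eqP|] := hz z; first by rewrite (negbTE h0).
by rewrite eh nu_frac //; lia.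
Qed.

Section Moebius.
Context {K : fieldType}.
Implicit Types al be ga de : K.

Lemma nu_moebius_pole {al be ga de} : al * de - be * ga != 0 -> ga != 0 ->
  nu (Some (- de / ga)) (moebius al be ga de) = -1.
Proof.
move=> hdet ga0; set z0 := - de / ga.
pose num := al%:P * 'X + be%:P.
have num_z0 : num.[z0] != 0.
  have -> : num.[z0] = - (al * de - be * ga) / ga.
    by rewrite /num hornerD hornerCM hornerX hornerC /z0; field.
  by rewrite mulf_neq0 ?invr_eq0 ?oppr_eq0.
have num0 : num != 0 by apply: contraNneq num_z0 => ->; rewrite horner0.
have eden : ga%:P * ('X - z0%:P) = ga%:P * 'X + de%:P.
  by rewrite mulrBr -polyCM /z0 mulrCA divff // mulr1 polyCN opprK.
have eM : moebius al be ga de = rpoly num / rpoly (ga%:P * ('X - z0%:P)).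
  by rewrite eden /moebius /num /rX /rcst !rmorphD !rmorphM.
rewrite eM nu_frac ?mulf_neq0 ?polyC_eq0 ?polyXsubC_eq0 //= mupM ?polyC_eq0 ?polyXsubC_eq0 //.
rewrite (mupNroot num_z0) mupNroot ?rootC //.
by rewrite -(expr1 ('X - z0%:P)) mup_XsubCX eqxx.
Qed.

Lemma moebius_affine al be {de} : de != 0 ->
  moebius al be 0 de = rcst (al / de) * rX K + rcst (be / de).
Proof.
move=> de0; rewrite /moebius rmorph0 mul0r add0r !rmorphM rmorphV ?unitfE //.
by rewrite mulrDl mulrAC.
Qed.

Lemma nu_affine_sub a b s : a != 0 ->
  nu (Some ((s - b) / a)) (rcst a * rX K + rcst b - rcst s) = 1.
Proof.
move=> a0; have ra : rcst a != 0 :> ratfun K by rewrite rpoly_eq0 polyC_eq0.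
have -> : rcst a * rX K + rcst b - rcst s = rcst a * (rX K - rcst ((s - b) / a)).
  by rewrite mulrBr -rmorphM mulrCA divff // mulr1 rmorphB; ring.
by rewrite nuM ?rXsubC_neq0 // nu_rcst nu_rXsubC eqxx add0r.
Qed.

End Moebius.

Section FormTheory.
Context {K : fieldType} {p n d1 d2 d3 : nat} {d : 'I_n -> nat}.
Context {F G H : {poly K}} {J : 'I_n -> {poly K}} {theta : 'I_n -> K}.
Hypothesis hg : is_form p d1 d2 d3 d F G H J theta.
Local Notation g := (gform F G H J theta (rX K)).

Lemma is_form_pfree_polar z : pfree_polar p z g.
Proof.
case: hg => [[_ _ hF] [_ _ hG] [_ _ hH] hJ _].
by apply: pfree_polar_gform => // j; case: (hJ j).
Qed.

Lemma is_form_pole_fin a : (0 < pole (Some a) g)%N ->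
  [\/ a = 0 /\ pole (Some a) g = d2, a = 1 /\ pole (Some a) g = d3
    | exists j, pole (Some a) g = d j].
Proof.
case: hg => [_ [sG _ _] [sH _ _] hJ [hth inj]] /(pole_gform_rX a hth inj).
rewrite sG sH; case=> [|| [j ->]]; [by constructor 1 | by constructor 2 | constructor 3].
by exists j; case: (hJ j) => ->.
Qed.

Lemma is_form_inf : exists2 R, nu_ge None 1 R & g = rpoly F + R.
Proof.
case: hg => [_ [_ _ hG] [_ _ hH] hJ _].
by apply: gform_rX_inf; rewrite ?hG ?hH // => j; case: (hJ j) => _ _ ->.
Qed.

End FormTheory.

Section Transformation.
Context {K : fieldType} {p n d1 d2 d3 : nat} {d : 'I_n -> nat}.
Hypotheses (p_gt1 : (1 < p)%N) (hd12 : (d2 < d1)%N) (hd23 : (d3 < d2)%N)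
  (hdisj : forall j, [/\ d j != d1, d j != d2 & d j != d3]).
Context {F G H : {poly K}} {J : 'I_n -> {poly K}} {theta : 'I_n -> K}.
Context {F' G' H' : {poly K}} {J' : 'I_n -> {poly K}} {theta' : 'I_n -> K}.
Hypotheses (hg : is_form p d1 d2 d3 d F G H J theta)
  (hg' : is_form p d1 d2 d3 d F' G' H' J' theta').
Context {lambda : K} {M h : ratfun K}.
Hypotheses (hl0 : lambda != 0) (htrans : gform F G H J theta M
  = rcst lambda * gform F' G' H' J' theta' (rX K) + (h ^+ p - h)).
Local Notation gM := (gform F G H J theta M).
Local Notation g' := (gform F' G' H' J' theta' (rX K)).

Lemma transform_pole z : not_pmul p (pole z gM) -> pole z g' = pole z gM.
Proof.
move=> hM; rewrite -(poleZ z lambda g' hl0); symmetry.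
apply: (pole_eq_AS _ _ _ _ h p_gt1 hM); last by rewrite htrans addrAC subrr add0r.
by rewrite poleZ //; apply/pfree_polar_not_pmul/(is_form_pfree_polar hg').
Qed.

Lemma transform_pole_fin a D : pole (Some a) gM = D -> (0 < D)%N -> ~~ (p %| D)%N ->
  [\/ a = 0 /\ D = d2, a = 1 /\ D = d3 | exists j, D = d j].
Proof.
move=> hD D0 pD; have hg'D : pole (Some a) g' = D.
  by rewrite transform_pole hD // => /(negP pD).
by move: (is_form_pole_fin hg' a); rewrite hg'D => /(_ D0).
Qed.

Lemma transform_moebius_gamma0 {al be ga de} : M = moebius al be ga de ->
  al * de - be * ga != 0 -> ga = 0.
Proof.
move=> eM hdet; apply/eqP; apply: contraT => ga0.
case: hg => [[sF pF _] _ _ _ _].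
have := @pole_gform_pole _ _ F G H J theta _ _ (nu_moebius_pole hdet ga0).
rewrite -eM sF /= => /transform_pole_fin /(_ (leq_ltn_trans (leq0n _) hd12) pF).
case=> [[_ e]|[_ e]|[j e]]; last by case: (hdisj j); rewrite e eqxx.
  by move: hd12; rewrite e ltnn.
by move: (ltn_trans hd23 hd12); rewrite e ltnn.
Qed.

Lemma transform_affine {a b} : M = rcst a * rX K + rcst b -> a != 0 -> a = 1 /\ b = 0.
Proof.
move=> eM a0; case: hg => [_ [sG pG _] [sH pH _] _ [hth _]].
have d3pos : (0 < d3)%N by rewrite lt0n; apply: contraNneq pH => ->.
have d2pos : (0 < d2)%N := leq_ltn_trans (leq0n _) hd23.
have b0 : b = 0.
  have := @pole_gform_zero0 _ _ F G H J theta _ _ (fun j => proj1 (hth j))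
    (nu_affine_sub a b 0 a0).
  rewrite -eM sG /= => /transform_pole_fin /(_ d2pos pG).
  case=> [[e _]|[_ e]|[j e]]; last by case: (hdisj j); rewrite e eqxx.
    by apply/eqP; move/eqP: e; rewrite mulf_eq0 invr_eq0 (negbTE a0) orbF sub0r oppr_eq0.
  by move: hd23; rewrite e ltnn.
split=> //.
have := @pole_gform_zero1 _ _ F G H J theta _ _ (fun j => proj2 (hth j))
  (nu_affine_sub a b 1 a0).
rewrite -eM sH /= => /transform_pole_fin /(_ d3pos pH).
case=> [[_ e]|[e _]|[j e]]; last by case: (hdisj j); rewrite e eqxx.
  by move: hd23; rewrite e ltnn.
by move/eqP: e; rewrite b0 subr0 mul1r invr_eq1 => /eqP.
Qed.

Hypothesis eM : M = rX K.

Lemma transform_id_pole_free z : pole z h = 0%N.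
Proof.
have e : h ^+ p - h = gM + rcst (- lambda) * g'.
  by rewrite htrans rmorphN mulNr addrAC subrr add0r.
have /pfree_polar_not_pmul : pfree_polar p z (h ^+ p - h).
  rewrite e eM; apply: pfree_polarD; first exact: is_form_pfree_polar hg z.
  by apply: pfree_polarZ; apply: is_form_pfree_polar hg' z.
rewrite pole_AS // => /(_ (dvdn_mulr _ (dvdnn p))) /eqP.
by rewrite muln_eq0 (gtn_eqF (ltnW p_gt1)) => /eqP.
Qed.

Lemma transform_id_rcst {c} : h = rcst c -> c ^+ p = c.
Proof.
move=> ehc; have [R hR eR] := is_form_inf hg; have [R' hR' eR'] := is_form_inf hg'.
set Q := F - lambda%:P * F' - (c ^+ p - c)%:P.
have eQ : rpoly Q = rcst lambda * R' - R.
  have -> : rpoly Q = rpoly F - rcst lambda * rpoly F' - (rcst c ^+ p - rcst c).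
    by rewrite /Q !rmorphB rmorphM -rmorphXn.
  move: htrans; rewrite eM eR eR' ehc => e.
  by rewrite -[rpoly F](addrK R) e; ring.
have Q0 : Q = 0.
  apply: nu_inf_ge1_rpoly; rewrite eQ; apply: nu_geD (nu_geN hR).
  by rewrite -[1]add0r; apply: nu_geM (nu_ge_rcst _ _) hR'.
move: (congr1 (fun P : {poly K} => P`_0) Q0).
case: hg hg' => [[_ _ pF] _ _ _ _] [[_ _ pF'] _ _ _ _].
rewrite /Q !coefB coefCM coefC /= pF ?pF' ?dvdn0 // mulr0 !sub0r coef0.
by rewrite oppr0 sub0r => /eqP; rewrite oppr_eq0 subr_eq0 => /eqP.
Qed.

End Transformation.

Theorem theorem6p6
  (p : nat) (K : closedFieldType)
  (p_prime : prime p) (p_odd : odd p)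
  (charK : p \in [pchar K])
  (K_alg : forall x : K, exists k : nat, (0 < k)%N /\ x ^+ (p ^ k) = x)
  (n d1 d2 d3 : nat) (d : 'I_n -> nat)
  (hd12 : (d2 < d1)%N) (hd23 : (d3 < d2)%N)
  (hdisj : forall j : 'I_n, [/\ d j != d1, d j != d2 & d j != d3])
  (F G H : {poly K}) (J : 'I_n -> {poly K}) (theta : 'I_n -> K)
  (F' G' H' : {poly K}) (J' : 'I_n -> {poly K}) (theta' : 'I_n -> K)
  (hg : is_form p d1 d2 d3 d F G H J theta)
  (hg' : is_form p d1 d2 d3 d F' G' H' J' theta')
  (alpha beta gamma delta : K) (hdet : alpha * delta - beta * gamma != 0)
  (lambda : K) (hl0 : lambda != 0) (hlp : lambda ^+ p = lambda)
  (h : ratfun K)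
  (htrans : gform F G H J theta (moebius alpha beta gamma delta)
            = rcst lambda * gform F' G' H' J' theta' (rX K) + (h ^+ p - h)) :
  moebius alpha beta gamma delta = rX K /\
  exists c : K, c ^+ p = c /\ h = rcst c.
Proof.
have p_gt1 := prime_gt1 p_prime.
have ga0 := transform_moebius_gamma0 p_gt1 hd12 hd23 hdisj hg hg' hl0 htrans erefl hdet.
move: hdet htrans; rewrite ga0 mulr0 subr0 mulf_eq0 negb_or => /andP[al0 de0] htrans.
have eM := moebius_affine alpha beta de0.
have [a1 b0] := transform_affine p_gt1 hd23 hdisj hg hg' hl0 htrans eM
  (mulf_neq0 al0 (invr_neq0 de0)).
have eX : moebius alpha beta 0 delta = rX K.
  by rewrite eM a1 b0 rmorph1 rmorph0 mul1r addr0.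
split=> //.
have [c ehc] := pole_free_rcst (transform_id_pole_free p_gt1 hg hg' htrans eX).
by exists c; split=> //; exact: (transform_id_rcst hg hg' htrans eX ehc).
Qed.
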